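(* Let $\mathbf B_n$ be the $n$-th Bell number. Then $\lim_{n\to\infty}\mathbf B_n/\alpha_n(12\text{-}34)=0$.
   Context: A permutation $\pi=\pi_1\cdots\pi_n$ of $\{1,\dots,n\}$ contains the generalized pattern $12\text{-}34$ if there are indices $i<j$ with $i+1<j$ such that $\pi_i<\pi_{i+1}<\pi_j<\pi_{j+1}$; otherwise it avoids it. $\alpha_n(12\text{-}34)$ is the number of permutations of $\{1,\dots,n\}$ avoiding $12\text{-}34$. The Bell number $\mathbf B_n$ is the number of set partitions of an $n$-element set. *)

From mathcomp Require Import all_boot all_fingroup.
From Stdlib Require Import Reals.

Set Implicit Arguments.
Unset Strict Implicit.
Unset Printing Implicit Defensive.

(* One-line notation of a permutation of {0,...,n-1} (order-isomorphic to
   {1,...,n}): the sequence pi_0 ... pi_{n-1}. *)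
Definition perm_word (n : nat) (pi : 'S_n) : seq nat :=
  [seq val (pi i) | i <- enum 'I_n].

Definition contains_12_34 (n : nat) (pi : 'S_n) : bool :=
  let s := perm_word pi in
  [exists i : 'I_n, exists j : 'I_n,
     [&& i.+1 < j, j.+1 < n,
         nth 0 s i < nth 0 s i.+1,
         nth 0 s i.+1 < nth 0 s j &
         nth 0 s j < nth 0 s j.+1]].

Definition alpha_12_34 (n : nat) : nat :=
  #|[set pi : 'S_n | ~~ contains_12_34 pi]|.

Definition bell (n : nat) : nat :=
  #|[set P : {set {set 'I_n}} | partition P [set: 'I_n]]|.

From mathcomp Require Import all_boot all_fingroup zify.
From Stdlib Require Import Reals Lra.
(* Reals rebinds the nat notations (^, <=, ...) to Stdlib's; re-importing
   ssrnat restores them while keeping %R for R_scope. *)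
From mathcomp Require Import ssrnat.

Set Implicit Arguments.
Unset Strict Implicit.
Unset Printing Implicit Defensive.

(* Both quantities are compared with n!.  Splitting off the block of a fixed
   point gives B_(n+1) <= sum_k C(n,k) B_k, and since sum_j 3^(j+1)/j! < 3e^3
   this recursion propagates the bound B_n <= K n!/3^n once n is large.  On the
   other side, every permutation whose even positions carry the ceil(n/2)
   smallest values and whose odd positions carry the others avoids 12-34: both
   ascents pi_i < pi_(i+1) and pi_j < pi_(j+1) must go from an even to an odd
   position, and then pi_(i+1) < pi_j compares a large value with a small one.
   Hence alpha_n >= ceil(n/2)! floor(n/2)! >= n!/2^n, so that
   B_n/alpha_n <= K (2/3)^n. *)

Section SetPartitions.

Variable T : finType.
Implicit Types (A D B E : {set T}) (f : nat -> nat).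

Definition npartitions D : nat := #|[set P : {set {set T}} | partition P D]|.

Lemma npartitions_le_exp2 D : npartitions D <= 2 ^ 2 ^ #|D|.
Proof.
rewrite -!card_powerset; apply: subset_leq_card; apply/subsetP => P.
by rewrite !inE => partP; apply/subsetP => B PB; rewrite inE (partitionS partP PB).
Qed.

Lemma npartitions_rec D x : x \in D ->
  npartitions D <= \sum_(B : {set T} | (x \in B) && (B \subset D)) npartitions (D :\: B).
Proof.
move=> Dx; rewrite /npartitions -sum1_card.
rewrite (partition_big (fun P => pblock P x) (fun B => (x \in B) && (B \subset D))) /=;
  last first.
  move=> P; rewrite inE => partP.
  have xP : x \in cover P by rewrite (cover_partition partP).
  by rewrite mem_pblock xP (partitionS partP (pblock_mem xP)).
apply: leq_sum => B _; rewrite sum1_card.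
set S := [set P | _].
have blockP P : partition P D -> pblock P x = B -> B \in P.
  move=> partP <-; apply: pblock_mem.
  by rewrite (cover_partition partP).
have -> : #|[pred P in S | pblock P x == B]|
          = #|[set P :\ B | P in [set P in S | pblock P x == B]]|.
  rewrite card_in_imset; first by apply: eq_card => P; rewrite !inE.
  move=> P Q; rewrite !inE => /andP[SP /eqP PB] /andP[SQ /eqP QB] PQ.
  by rewrite -(setD1K (blockP P SP PB)) -(setD1K (blockP Q SQ QB)) PQ.
apply: subset_leq_card; apply/subsetP => Q /imsetP[P]; rewrite !inE => /andP[SP /eqP PB] ->.
exact: partitionD1 SP (blockP P SP PB).
Qed.

Lemma sum_powerset_card A f :
  \sum_(E in powerset A) f #|E| = \sum_(k < #|A|.+1) 'C(#|A|, k) * f k.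
Proof.
transitivity (\sum_(E in powerset A) \sum_(k < #|A|.+1) (#|E| == k) * f k).
  apply: eq_bigr => E; rewrite inE => EA.
  have ltE : #|E| < #|A|.+1 by rewrite ltnS subset_leq_card.
  rewrite (bigD1 (Ordinal ltE)) //= eqxx mul1n big1 ?addn0 // => k /negPf.
  by rewrite -val_eqE /= eq_sym => ->.
rewrite exchange_big /=; apply: eq_bigr => k _.
rewrite (eq_bigr (fun E => if #|E| == k then f k else 0)); last first.
  by move=> E _; case: (_ == _); rewrite ?mul1n ?mul0n.
rewrite -big_mkcondr /= sum_nat_const -cards_draws; congr (_ * _).
by apply: eq_card => E; rewrite -topredE /= !inE.
Qed.

Lemma sum_card_setD_blocks D x f : x \in D ->
  \sum_(B : {set T} | (x \in B) && (B \subset D)) f #|D :\: B|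
  = \sum_(k < #|D|) 'C(#|D|.-1, k) * f k.
Proof.
move=> Dx.
have setDDK B : B \subset D -> D :\: (D :\: B) = B.
  by move=> BD; rewrite setDDr setDv set0U; apply/setIidPr.
have injD : {in [pred B : {set T} | (x \in B) && (B \subset D)] &,
               injective (fun B => D :\: B)}.
  move=> B1 B2 /andP[_ B1D] /andP[_ B2D] eqD.
  by rewrite -(setDDK B1 B1D) -(setDDK B2 B2D) eqD.
rewrite -(big_imset (fun E => f #|E|) injD) /=.
have -> : [set D :\: B | B in [pred B : {set T} | (x \in B) && (B \subset D)]]
          = powerset (D :\ x).
  apply/setP => E; rewrite inE; apply/imsetP/idP.
    case=> B /andP[xB BD] ->; apply/subsetP => y; rewrite !inE => /andP[yB ->].
    by rewrite andbT; apply: contraNneq yB => ->.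
  move=> ED; have ED' := subset_trans ED (subsetDl D [set x]).
  exists (D :\: E); last by rewrite setDDK.
  rewrite inE /= subsetDl andbT !inE Dx andbT; apply/negP => xE.
  by have := subsetP ED x xE; rewrite !inE eqxx.
have cardDx : #|D :\ x|.+1 = #|D| by rewrite (cardsD1 x D) Dx.
by rewrite sum_powerset_card -cardDx.
Qed.

End SetPartitions.

(* [e3fact n = n`! * \sum_(j <= n) 3 ^ j.+1 / j`!], a truncation of 3 e^3 n`!. *)
Fixpoint e3fact (n : nat) : nat :=
  if n is n'.+1 then 3 ^ n'.+2 + n'.+1 * e3fact n' else 3.

Lemma sum_bin_exp3_fact n :
  \sum_(k < n.+1) 'C(n, k) * (3 ^ (n.+1 - k) * k`!) = e3fact n.
Proof.
elim: n => [|n IHn]; first by rewrite big_ord_recl big_ord0.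
rewrite big_ord_recl /= bin0 fact0 subn0 !muln1 mul1n; congr (_ + _).
rewrite -IHn big_distrr /=; apply: eq_bigr => k _.
rewrite /bump /= add1n subSS.
have binS := bin_ffact n.+1 k.+1; rewrite ffactSS -bin_ffact in binS.
by rewrite mulnCA binS mulnCA; congr (_ * _); rewrite mulnCA.
Qed.

(* 3 ^ (n + 5) / n.+1 dominates the tail (n.+3)`! * \sum_(j > n.+3) 3 ^ j.+1 / j`!,
   which makes the estimate e3fact n <= 80 * n`! inductive. *)
Lemma e3fact_tail n : n.+1 * e3fact n.+3 + 3 ^ (n + 5) <= 80 * n.+1 * (n.+3)`!.
Proof.
elim: n => [|n IHn]; first by [].
have -> : e3fact n.+4 = 3 ^ (n + 5) + n.+4 * e3fact n.+3 by rewrite [n + 5]addnC.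
rewrite factS addSn expnS.
move: IHn; set S := e3fact _; set F := _`!; set t := 3 ^ _ => IHn.
have : n.+1 * (n.+2 * (t + n.+4 * S) + 3 * t) <= n.+1 * (80 * n.+2 * (n.+4 * F)).
  by nia.
by rewrite leq_pmul2l.
Qed.

Lemma e3fact_le_fact n : 79 <= n -> e3fact n <= (n.+1)`!.
Proof.
case: n => [|[|[|n]]] // le79n; have := e3fact_tail n.
rewrite -mulnA (factS n.+3) => tailP.
have : n.+1 * e3fact n.+3 <= n.+1 * (80 * (n.+3)`!) by lia.
rewrite leq_pmul2l // => /leq_trans; apply; rewrite leq_mul2r; lia.
Qed.

Lemma exp3_npartitions_le_fact (T : finType) (D : {set T}) K :
  3 ^ 79 * 2 ^ 2 ^ 79 <= K -> 3 ^ #|D| * npartitions D <= K * #|D|`!.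
Proof.
move=> leK; have small (E : {set T}) : #|E| <= 79 -> 3 ^ #|E| * npartitions E <= K * #|E|`!.
  move=> le79; apply: leq_trans (leq_pmulr _ (fact_gt0 _)); apply: leq_trans leK.
  apply: leq_mul; first exact: leq_pexp2l.
  apply: leq_trans (npartitions_le_exp2 E) _.
  by apply: leq_pexp2l => //; apply: leq_pexp2l.
clear leK; have [m] := ubnP #|D|; elim: m D => [|m IHm] D; first by rewrite ltn0.
move=> ltDm; have [/small // | gt79] := leqP #|D| 79.
have [x Dx] : {x | x \in D} by apply/sigW/set0Pn; rewrite -card_gt0; lia.
have [n cardD] : {n | #|D| = n.+1} by exists #|D|.-1; lia.
apply: leq_trans (leq_mul (leqnn _) (npartitions_rec Dx)) _.
rewrite big_distrr /=.
apply: (@leq_trans (\sum_(B : {set T} | (x \in B) && (B \subset D))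
                      3 ^ (#|D| - #|D :\: B|) * (K * #|D :\: B|`!))).
  apply: leq_sum => B /andP[xB BD].
  have ltBD : #|D :\: B| < #|D|.
    by apply/proper_card/properP; split; [exact: subsetDl | exists x; rewrite // !inE xB].
  rewrite -{1}(subnK (ltnW ltBD)) expnD -mulnA leq_mul2l IHm ?orbT //; lia.
rewrite (sum_card_setD_blocks (fun k => 3 ^ (#|D| - k) * (K * k`!)) Dx) cardD /=.
apply: leq_trans (leq_mul (leqnn K) (e3fact_le_fact _)); last by lia.
rewrite -sum_bin_exp3_fact big_distrr /=; apply/eq_leq/eq_bigr => k _.
by rewrite [3 ^ _ * _]mulnCA mulnCA.
Qed.

Lemma exp3_bell_le_fact : exists K, forall n, 3 ^ n * bell n <= K * n`!.
Proof.
exists (3 ^ 79 * 2 ^ 2 ^ 79) => n.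
by have := exp3_npartitions_le_fact [set: 'I_n] (leqnn _); rewrite cardsT card_ord.
Qed.

Lemma nth_perm_word n (s : 'S_n) (i : 'I_n) : nth 0 (perm_word s) i = s i.
Proof. by rewrite /perm_word (nth_map i) ?size_enum_ord // nth_ord_enum. Qed.

Lemma nth_perm_word_lt n (s : 'S_n) k : k < n -> nth 0 (perm_word s) k < n.
Proof. by move=> ltkn; rewrite (nth_perm_word s (Ordinal ltkn)). Qed.

Lemma uphalf_add_half n : uphalf n + n./2 = n.
Proof. by rewrite uphalf_half -addnA addnn odd_double_half. Qed.

Lemma half_lt_half i n : i < n -> odd i -> i./2 < n./2.
Proof.
move=> ltin oddi; move: (odd_double_half i) (odd_double_half n).
by rewrite oddi -!muln2; case: (odd n) => /=; lia.
Qed.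

Lemma half_lt_uphalf i n : i < n -> i./2 < uphalf n.
Proof.
move=> ltin; rewrite uphalf_half; move: (odd_double_half i) (odd_double_half n).
by rewrite -!muln2; case: (odd i); case: (odd n) => /=; lia.
Qed.

Section Interleaving.

Variable n : nat.
Local Notation e := (uphalf n).
Local Notation o := (n./2).
Implicit Types (s : 'S_e) (t : 'S_o).

Definition interleave_word s t (i : nat) : nat :=
  if odd i then e + nth 0 (perm_word t) i./2 else nth 0 (perm_word s) i./2.

Lemma interleave_word_lt s t (i : 'I_n) : interleave_word s t i < n.
Proof.
rewrite /interleave_word -[X in _ < X]uphalf_add_half; case: ifP => oddi.
  by rewrite ltn_add2l nth_perm_word_lt // half_lt_half.
by rewrite ltn_addr // nth_perm_word_lt // half_lt_uphalf.
Qed.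

Lemma interleave_word_ge s t i : i < n -> (e <= interleave_word s t i) = odd i.
Proof.
move=> ltin; rewrite /interleave_word; case: ifP => _; first by rewrite leq_addr.
by apply/negbTE; rewrite -ltnNge nth_perm_word_lt // half_lt_uphalf.
Qed.

Definition interleave_fun s t (i : 'I_n) : 'I_n := Ordinal (interleave_word_lt s t i).

Lemma interleave_fun_inj s t : injective (interleave_fun s t).
Proof.
move=> i j /(congr1 val) /= eqij; apply: ord_inj.
have eq_odd : odd i = odd j.
  rewrite -(interleave_word_ge s t (ltn_ord i)) -(interleave_word_ge s t (ltn_ord j)).
  by rewrite eqij.
rewrite -(odd_double_half i) -(odd_double_half j) eq_odd; congr (_ + _.*2).
move: eqij; rewrite /interleave_word eq_odd; case: ifP => oddj.
  have lti := half_lt_half (ltn_ord i) (etrans eq_odd oddj).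
  have ltj := half_lt_half (ltn_ord j) oddj.
  move/addnI; rewrite (nth_perm_word t (Ordinal lti)) (nth_perm_word t (Ordinal ltj)).
  by move/val_inj/perm_inj/(congr1 val).
have lti := half_lt_uphalf (ltn_ord i); have ltj := half_lt_uphalf (ltn_ord j).
rewrite (nth_perm_word s (Ordinal lti)) (nth_perm_word s (Ordinal ltj)).
by move/val_inj/perm_inj/(congr1 val).
Qed.

Definition interleave (st : 'S_e * 'S_o) : 'S_n := perm (@interleave_fun_inj st.1 st.2).

Lemma nth_interleave st k :
  k < n -> nth 0 (perm_word (interleave st)) k = interleave_word st.1 st.2 k.
Proof. by move=> ltkn; rewrite (nth_perm_word _ (Ordinal ltkn)) permE. Qed.

Lemma interleave_avoids st : ~~ contains_12_34 (interleave st).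
Proof.
apply/negP => /existsP[i] /existsP[j] /and5P[ltij ltjn asc_i asc_ij asc_j].
have lti1n : i.+1 < n by lia.
have ltjn' : (j : nat) < n by lia.
move: asc_i asc_ij asc_j; rewrite !nth_interleave //.
have := interleave_word_ge st.1 st.2 (ltn_ord i).
have := interleave_word_ge st.1 st.2 lti1n.
have := interleave_word_ge st.1 st.2 ltjn'.
have := interleave_word_ge st.1 st.2 ltjn.
by rewrite /=; case: (odd i); case: (odd j) => /=; lia.
Qed.

Lemma interleave_inj : injective interleave.
Proof.
move=> [s t] [s' t'] eq_st.
have eq_word k : k < n -> interleave_word s t k = interleave_word s' t' k.
  move=> ltkn.
  by rewrite -(nth_interleave (s, t) ltkn) -(nth_interleave (s', t') ltkn) eq_st.
have ltn_double (k : 'I_e) : k.*2 < n.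
  by have := ltn_ord k; rewrite gtn_uphalf_double.
have ltn_double1 (k : 'I_o) : k.*2.+1 < n.
  by have := ltn_ord k; move: (odd_double_half n); rewrite -muln2; case: (odd n) => /=; lia.
congr (_, _); apply/perm.permP => k; apply/val_inj.
  have := eq_word _ (ltn_double k); rewrite /interleave_word odd_double doubleK.
  by rewrite !(nth_perm_word _ k).
have := eq_word _ (ltn_double1 k); rewrite /interleave_word /= odd_double /= uphalf_double.
by rewrite !(nth_perm_word _ k) => /addnI.
Qed.

Lemma fact_uphalf_mul_fact_half_le_alpha : e`! * o`! <= alpha_12_34 n.
Proof.
rewrite -!card_Sn -card_prod -cardsT -(card_in_imset (f := interleave)); last first.
  by move=> st st' _ _; apply: interleave_inj.
apply/subset_leq_card/subsetP => _ /imsetP[st _ ->].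
by rewrite inE interleave_avoids.
Qed.

End Interleaving.

Lemma bin_le_exp2 n m : 'C(n, m) <= 2 ^ n.
Proof.
elim: n m => [|n IHn] [|m] //; first by rewrite bin0 expn_gt0.
by rewrite binS expnS mul2n -addnn leq_add.
Qed.

Lemma fact_le_exp2_alpha n : n`! <= 2 ^ n * alpha_12_34 n.
Proof.
have le_half : n./2 <= n by rewrite -{2}(uphalf_add_half n) leq_addl.
rewrite -(bin_fact le_half).
have -> : n - n./2 = uphalf n by rewrite -{1}(uphalf_add_half n) addnK.
rewrite leq_mul ?bin_le_exp2 //.
by rewrite mulnC fact_uphalf_mul_fact_half_le_alpha.
Qed.

Lemma alpha_12_34_gt0 n : 0 < alpha_12_34 n.
Proof.
apply: leq_trans (fact_uphalf_mul_fact_half_le_alpha n).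
by rewrite muln_gt0 !fact_gt0.
Qed.

Lemma exp3_bell_le_exp2_alpha :
  exists K, forall n, 3 ^ n * bell n <= K * 2 ^ n * alpha_12_34 n.
Proof.
have [K bellK] := exp3_bell_le_fact; exists K => n.
by apply: leq_trans (bellK n) _; rewrite -mulnA leq_mul2l fact_le_exp2_alpha orbT.
Qed.

Open Scope R_scope.

Lemma INR_expn a n : INR (a ^ n) = INR a ^ n.
Proof. by elim: n => [|n IHn] //=; rewrite expnS mulnE mult_INR IHn. Qed.

Lemma INR_div_le_geometric (a b K n : nat) : (0 < b)%N ->
  (3 ^ n * a <= K * 2 ^ n * b)%N -> 0 <= INR a / INR b <= INR K * (2 / 3) ^ n.
Proof.
move=> /ltP/lt_0_INR b_gt0 /leP/le_INR; rewrite !mulnE !mult_INR !INR_expn /= => le_ab.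
have a_ge0 := pos_INR a.
have pow3_gt0 : 0 < (1 + 1 + 1) ^ n by apply: pow_lt; lra.
have pow23 : (2 / 3) ^ n * (1 + 1 + 1) ^ n = (1 + 1) ^ n.
  by rewrite -Rpow_mult_distr; congr (_ ^ _); field.
split; first exact: Rle_mult_inv_pos.
apply: (Rmult_le_reg_r (INR b)) => //.
have -> : INR a / INR b * INR b = INR a by field; lra.
apply: (Rmult_le_reg_l ((1 + 1 + 1) ^ n)) => //.
by apply: (Rle_trans _ _ _ le_ab); right; rewrite -pow23; ring.
Qed.

Lemma Un_cv_0_le_geometric (u : nat -> R) (C q : R) : 0 <= q < 1 ->
  (forall n, 0 <= u n <= C * q ^ n) -> Un_cv u 0.
Proof.
move=> q01 u_bound eps eps_gt0.
have absq : Rabs q < 1 by rewrite Rabs_right; lra.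
have C1_gt0 : 0 < Rabs C + 1 by have := Rabs_pos C; lra.
have [N powN] :=
  pow_lt_1_zero q absq (eps / (Rabs C + 1)) (Rdiv_lt_0_compat _ _ eps_gt0 C1_gt0).
exists N => n leNn; rewrite /R_dist Rminus_0_r.
have [u_ge0 u_le] := u_bound n.
have pow_ge0 : 0 <= q ^ n by apply: pow_le; lra.
have := powN n leNn; rewrite Rabs_right; last lra.
set d := eps / _ => pow_lt_d.
have C_le : C * q ^ n <= Rabs C * d.
  apply: Rle_trans (Rmult_le_compat_r _ _ _ pow_ge0 (Rle_abs C)) _.
  by apply: Rmult_le_compat_l; [apply: Rabs_pos | lra].
have eps_eq : eps = Rabs C * d + d by rewrite /d; field; lra.
have d_gt0 : 0 < d by apply: Rdiv_lt_0_compat.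
by rewrite Rabs_right; lra.
Qed.

Theorem mainTheorem6 :
  Un_cv (fun n : nat => (INR (bell n) / INR (alpha_12_34 n))%R) 0%R.
Proof.
have [K bellK] := exp3_bell_le_exp2_alpha.
apply: (@Un_cv_0_le_geometric _ (INR K) (2 / 3)); first lra.
by move=> n; apply: INR_div_le_geometric; [exact: alpha_12_34_gt0 | exact: bellK].
Qed.
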